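(* Let $M$ be a matroid on $S$ and $N$ a matroid on $T$ with $S\cap T=\emptyset$, and let $L=M\mathbin{\Box} N$. A subset $A\neq S$ of $S\cup T$ is a cyclic flat of $L$ if and only if either $A\subseteq S$ and $A$ is a cyclic flat of $M$, or $A=S\cup B$ where $B$ is a nonempty cyclic flat of $N$. The set $S$ is a cyclic flat of $L$ if and only if $M$ has no isthmus and $N$ has no loop.
   Context: For a matroid $M$ on $S$ write $\rho_M$ for rank, $\rho(M)=\rho_M(S)$, $\nu_M(A)=|A|-\rho_M(A)$, $\lambda_M(A)=\rho(M)-\rho_M(A)$. For matroids $M$ on $S$ and $N$ on $T$ with $S\cap T=\emptyset$, the free product $M\mathbin{\Box} N$ is the matroid on $S\cup T$ whose independent sets are those $A$ with $A\cap S$ independent in $M$ and $\lambda_M(A\cap S)\geq\nu_N(A\cap T)$. A cyclic flat is a flat that is a union of circuits (equivalently a flat $F$ with $M|F$ isthmusless). *)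

From mathcomp Require Import all_boot.
Set Implicit Arguments. Unset Strict Implicit. Unset Printing Implicit Defensive.

(* Matroids are given by a ground set E : {set U} inside a finite universe U
   together with an independence predicate I on subsets of U. *)
Section Matroids.
Variable U : finType.

Definition is_matroid (E : {set U}) (I : {set U} -> bool) : Prop :=
  [/\ (forall X : {set U}, I X -> X \subset E),
      I set0,
      (forall X Y : {set U}, Y \subset X -> I X -> I Y) &
      (forall X Y : {set U}, I X -> I Y -> #|X| < #|Y| ->
         exists2 y, y \in Y :\: X & I (y |: X))].

Definition rk (I : {set U} -> bool) (X : {set U}) : nat :=
  \max_(Y : {set U} | (Y \subset X) && I Y) #|Y|.

Definition nullity (I : {set U} -> bool) (A : {set U}) : nat := #|A| - rk I A.
Definition lambda (E : {set U}) (I : {set U} -> bool) (A : {set U}) : nat :=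
  rk I E - rk I A.

Definition flat (E : {set U}) (I : {set U} -> bool) (F : {set U}) : Prop :=
  F \subset E /\ forall x, x \in E :\: F -> rk I F < rk I (x |: F).

Definition circuit (E : {set U}) (I : {set U} -> bool) (C : {set U}) : Prop :=
  [/\ C \subset E, ~~ I C & forall x, x \in C -> I (C :\ x)].

Definition cyclic_flat (E : {set U}) (I : {set U} -> bool) (F : {set U}) : Prop :=
  flat E I F /\
  forall x, x \in F -> exists C : {set U}, [/\ circuit E I C, C \subset F & x \in C].

Definition isthmus (E : {set U}) (I : {set U} -> bool) (x : U) : Prop :=
  x \in E /\ rk I (E :\ x) < rk I E.

Definition loop (E : {set U}) (I : {set U} -> bool) (x : U) : Prop :=
  x \in E /\ ~~ I [set x].

Definition free_product_indep (S : {set U}) (IM : {set U} -> bool)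
    (T : {set U}) (IN : {set U} -> bool) (A : {set U}) : bool :=
  [&& A \subset S :|: T, IM (A :&: S) &
      nullity IN (A :&: T) <= lambda S IM (A :&: S)].

End Matroids.

From mathcomp Require Import all_boot zify.
Set Implicit Arguments. Unset Strict Implicit. Unset Printing Implicit Defensive.

(* For X \subset S and Y \subset T the rank function of L = M [] N is
     rk_L (X :|: Y) = minn (rk_M X + #|Y|) (rk M + rk_N Y),
   and a flat F is cyclic iff rk (F :\ x) = rk F for all x in F, so the theorem
   reduces to arithmetic with this formula.  On subsets of S, rk_L is rk_M; on
   S :|: Y it is rk M + rk_N Y, which matches the cyclic flats of L containing S
   with those of N.  A cyclic flat A of L that meets T contains S: since an
   element of A :&: T is not a coloop of L|A, rk_L A = rk M + rk_N (A :&: T), a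
   value that adding an element of S cannot increase. *)

Section Universe.
Variable U : finType.
Implicit Types (A B C F X Y Z : {set U}) (I : {set U} -> bool).

Lemma rk_leq_card I X : rk I X <= #|X|.
Proof. by apply/bigmax_leqP => Y /andP[sYX _]; apply: subset_leq_card. Qed.

Lemma indep_leq_rk I X Y : Y \subset X -> I Y -> #|Y| <= rk I X.
Proof.
by move=> sYX iY; apply: (leq_bigmax_cond (F := fun Y : {set U} => #|Y|)); rewrite sYX.
Qed.

Lemma rk_indep I X : I X -> rk I X = #|X|.
Proof. by move=> iX; apply/eqP; rewrite eqn_leq rk_leq_card indep_leq_rk. Qed.

Lemma rk_ltn_card I B x : x \in B -> rk I (B :\ x) = rk I B -> rk I B < #|B|.
Proof. by move=> xB <-; have := rk_leq_card I (B :\ x); rewrite (cardsD1 x B) xB. Qed.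

Section IndependenceSystem.
Variable I : {set U} -> bool.
Hypothesis indep0 : I set0.

Lemma exists_rk_basis X : exists2 B : {set U}, (B \subset X) && I B & #|B| = rk I X.
Proof.
have : 0 < #|[pred B : {set U} | (B \subset X) && I B]|.
  by apply/card_gt0P; exists set0; rewrite inE sub0set indep0.
by case/(eq_bigmax_cond (fun B : {set U} => #|B|)) => B; exists B.
Qed.

Lemma rkS X Y : X \subset Y -> rk I X <= rk I Y.
Proof.
move=> sXY; have [B /andP[sBX iB] <-] := exists_rk_basis X.
exact: indep_leq_rk (subset_trans sBX sXY) iB.
Qed.

Lemma rk_set1 x : rk I [set x] = I [set x].
Proof.
case: (boolP (I _)) => [ix | nix]; first by rewrite rk_indep ?cards1.
have [B /andP[sBx iB] <-] := exists_rk_basis [set x].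
move: sBx; rewrite subset1 => /orP[] /eqP eB; first by move: iB; rewrite eB (negbTE nix).
by rewrite eB cards0.
Qed.

Lemma nullity_setU1 X y : nullity I (y |: X) <= (nullity I X).+1.
Proof.
have := rkS (subsetUr [set y] X); have := rk_leq_card I X.
by rewrite /nullity cardsU1; case: (y \in X) => /=; lia.
Qed.

Hypothesis indep_subset : forall X Y, Y \subset X -> I X -> I Y.

Lemma rk_setD1 X x : rk I X <= (rk I (X :\ x)).+1.
Proof.
have [B /andP[sBX iB] <-] := exists_rk_basis X.
have := indep_leq_rk (setSD [set x] sBX) (indep_subset (subD1set B x) iB).
by rewrite (cardsD1 x B); case: (x \in B) => /=; lia.
Qed.

Lemma nullityS X Y : Y \subset X -> nullity I Y <= nullity I X.
Proof.
move=> sYX; have [B /andP[sBX iB] eB] := exists_rk_basis X.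
have := indep_leq_rk (subsetIr B Y) (indep_subset (subsetIl B Y) iB).
have := subset_leq_card (setSD Y sBX); have := cardsID Y B.
have := rk_leq_card I Y; have := subset_leq_card sYX.
by rewrite /nullity -eB (cardsDS sYX); lia.
Qed.

End IndependenceSystem.

Lemma exists_subset_card A B k : A \subset B -> #|A| <= k <= #|B| ->
  exists C, [/\ A \subset C, C \subset B & #|C| = k].
Proof.
move=> sAB /andP[leAk lekB].
have /card_geqP[s [uniq_s size_s sBA]] : k - #|A| <= #|B :\: A|.
  by rewrite (cardsDS sAB); lia.
have disAs : A :&: [set x in s] = set0.
  by apply/setP => x; rewrite !inE; apply/negP => /andP[xA /sBA]; rewrite inE xA.
exists (A :|: [set x in s]); split; first exact: subsetUl.
  by rewrite subUset sAB; apply/subsetP => x; rewrite inE => /sBA /setDP[].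
by rewrite cardsU disAs cards0 subn0 cardsE (card_uniqP uniq_s); lia.
Qed.

Lemma matroid_indep0 E I : is_matroid E I -> I set0.
Proof. by case. Qed.

Lemma matroid_indep_subset E I :
  is_matroid E I -> forall X Y, Y \subset X -> I X -> I Y.
Proof. by case. Qed.

Lemma matroid_augment E I : is_matroid E I -> forall X Y, I X -> I Y ->
  #|X| < #|Y| -> exists2 y, y \in Y :\: X & I (y |: X).
Proof. by case. Qed.

Section Matroid.
Variables (E : {set U}) (I : {set U} -> bool).
Hypothesis matI : is_matroid E I.
Let indep0 := matroid_indep0 matI.
Let indep_subset := matroid_indep_subset matI.
Let augment := matroid_augment matI.

Lemma indep_extend B0 X : B0 \subset X -> I B0 ->
  exists B, [/\ B0 \subset B, B \subset X, I B & #|B| = rk I X].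
Proof.
move=> sB0X iB0; have indepB0 : (B0 \subset X) && I B0 by rewrite sB0X.
have [B /maxsetP[/andP[sBX iB] maxB] sB0B] :=
  maxset_exists (P := [pred B : {set U} | (B \subset X) && I B]) indepB0.
exists B; split=> //; apply/eqP; rewrite eqn_leq indep_leq_rk //=.
have [W /andP[sWX iW] <-] := exists_rk_basis indep0 X.
rewrite leqNgt; apply/negP => /(augment iB iW)[y /setDP[yW yB] iyB].
have /maxB eB : (y |: B \subset X) && I (y |: B).
  by rewrite subUset sub1set (subsetP sWX) ?sBX.
by move: yB; rewrite -(eB (subsetUr _ _)) setU11.
Qed.

Lemma rk_augment X Z : rk I X < rk I (X :|: Z) ->
  exists2 y, y \in Z & rk I X < rk I (y |: X).
Proof.
move=> ltXZ; have [B /andP[sBX iB] eB] := exists_rk_basis indep0 X.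
have [W /andP[sW iW] eW] := exists_rk_basis indep0 (X :|: Z).
have ltBW : #|B| < #|W| by rewrite eB eW.
have [y /setDP[yW yB] iyB] := augment iB iW ltBW.
have ltyX : rk I X < rk I (y |: X).
  by have := indep_leq_rk (setUS [set y] sBX) iyB; rewrite cardsU1 yB eB.
exists y => //; case/setUP: (subsetP sW y yW) => // yX.
by move: ltyX; rewrite (setUidPr _) ?sub1set ?ltnn.
Qed.

Lemma exists_circuit_rk F x : F \subset E -> x \in F ->
  (exists C, [/\ circuit E I C, C \subset F & x \in C]) <-> rk I (F :\ x) = rk I F.
Proof.
move=> sFE xF; split.
  case=> C [[_ depC minC] sCF xC].
  have [B [sCB sBF iB eB]] := indep_extend (subset_trans (subD1set C x) sCF) (minC x xC).
  apply/eqP; rewrite eqn_leq (rkS indep0 (subD1set F x)) -eB /=.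
  apply: (indep_leq_rk _ iB).
  apply/subsetP => z zB; rewrite !inE (subsetP sBF z zB) andbT.
  apply/eqP => ezx; move: depC; rewrite (indep_subset _ iB) //.
  by rewrite -(setD1K xC) subUset sCB sub1set -ezx zB.
move=> rkFx; have [B /andP[sB iB] eB] := exists_rk_basis indep0 (F :\ x).
have xB : x \notin B by apply/negP => /(subsetP sB); rewrite !inE eqxx.
have sxBF : x |: B \subset F by rewrite subUset sub1set xF (subset_trans sB (subD1set F x)).
have dep_xB : ~~ I (x |: B).
  by apply/negP => /(indep_leq_rk sxBF); rewrite cardsU1 xB eB rkFx ltnn.
have [C /minsetP[depC minC] sCxB] := minset_exists (P := [pred C : {set U} | ~~ I C]) dep_xB.
have xC : x \in C.
  apply: contraR depC => xC; apply: indep_subset iB.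
  by rewrite -(setU1K xB) subsetD1 sCxB.
have sCF : C \subset F := subset_trans sCxB sxBF.
exists C; split=> //; split=> //; first exact: subset_trans sCF sFE.
move=> z zC; apply: contraT => /minC/(_ (subD1set C z)) eC.
by move: zC; rewrite -eC !inE eqxx.
Qed.

Lemma cyclic_flat_rk F :
  cyclic_flat E I F <-> flat E I F /\ {in F, forall x, rk I (F :\ x) = rk I F}.
Proof.
split=> -[flF cycF]; split=> // x xF; apply/(exists_circuit_rk flF.1 xF); exact: cycF.
Qed.

End Matroid.

Lemma setD1_notin A x : x \notin A -> A :\ x = A.
Proof. by move=> xA; apply/setDidPl; rewrite disjoint_sym disjoints1. Qed.

Section FreeProduct.
Variables (S T : {set U}) (IM IN : {set U} -> bool).
Hypotheses (matM : is_matroid S IM) (matN : is_matroid T IN).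
Hypothesis disST : [disjoint S & T].

Let IM0 := matroid_indep0 matM.
Let IN0 := matroid_indep0 matN.
Let L := free_product_indep S IM T IN.
Let m := rk IM S.

Lemma notin_S y : y \in T -> y \notin S.
Proof. by move=> yT; rewrite (disjointFl disST yT). Qed.

Lemma notin_T y : y \in S -> y \notin T.
Proof. by move=> yS; rewrite (disjointFr disST yS). Qed.

Lemma setI_ST Z : Z \subset S :|: T -> Z = (Z :&: S) :|: (Z :&: T).
Proof. by move=> sZ; rewrite -setIUr (setIidPl sZ). Qed.

Lemma setUI_S X Y : X \subset S -> Y \subset T -> (X :|: Y) :&: S = X.
Proof.
move=> sX sY; rewrite setIUl (setIidPl sX) disjoint_setI0 ?setU0 //.
by rewrite disjoint_sym (disjointWr sY disST).
Qed.

Lemma setUI_T X Y : X \subset S -> Y \subset T -> (X :|: Y) :&: T = Y.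
Proof.
move=> sX sY; rewrite setIUl (setIidPl sY) disjoint_setI0 ?set0U //.
exact: disjointWl sX disST.
Qed.

Lemma card_setU_ST X Y : X \subset S -> Y \subset T -> #|X :|: Y| = #|X| + #|Y|.
Proof.
move=> sX sY; rewrite cardsU disjoint_setI0 ?cards0 ?subn0 //.
exact: disjointW sX sY disST.
Qed.

Lemma fp_indepE Z :
  L Z = [&& Z \subset S :|: T, IM (Z :&: S) & nullity IN (Z :&: T) + #|Z :&: S| <= m].
Proof.
rewrite /L /free_product_indep /lambda; case: (Z \subset _) => //=.
case iZS: (IM _) => //=; rewrite (rk_indep iZS) -/m.
have := indep_leq_rk (subsetIr Z S) iZS; rewrite -/m => leZSm.
by rewrite leq_subRL // addnC.
Qed.

Lemma fp_indep_setU X Y : X \subset S -> Y \subset T ->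
  L (X :|: Y) = IM X && (nullity IN Y + #|X| <= m).
Proof. by move=> sX sY; rewrite fp_indepE setUSS // setUI_S // setUI_T. Qed.

Lemma fp_augment X Y X' Y' : X \subset S -> Y \subset T -> X' \subset S -> Y' \subset T ->
  L (X :|: Y) -> L (X' :|: Y') -> #|X :|: Y| < #|X' :|: Y'| ->
  exists2 y, y \in (X' :|: Y') :\: (X :|: Y) & L (y |: (X :|: Y)).
Proof.
move=> sX sY sX' sY'; rewrite !fp_indep_setU // !card_setU_ST //.
move=> /andP[iX nY] /andP[iX' nY'] ltXY.
have newT y : y \in Y' -> y \notin Y -> y \in (X' :|: Y') :\: (X :|: Y).
  move=> yY' yY; rewrite !inE yY' orbT (negbTE yY) orbF andbT.
  exact: contra (subsetP sX y) (notin_S (subsetP sY' y yY')).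
have L_addT y : y \in T -> L (y |: (X :|: Y)) = IM X && (nullity IN (y |: Y) + #|X| <= m).
  by move=> yT; rewrite setUCA fp_indep_setU // subUset sub1set yT.
case: (ltnP (nullity IN Y + #|X|) m) => [slack | tight].
  case: (boolP (Y' \subset Y)) => [sY'Y | /subsetPn[y yY' yY]].
    have ltXX' : #|X| < #|X'|.
      rewrite -(ltn_add2r #|Y|); apply: (leq_trans ltXY).
      by rewrite leq_add2l subset_leq_card.
    have [y /setDP[yX' yX] iyX] := matroid_augment matM iX iX' ltXX'.
    have yS := subsetP sX' y yX'.
    exists y; first by rewrite !inE yX' negb_or yX (contra (subsetP sY y) (notin_T yS)).
    by rewrite setUA fp_indep_setU ?subUset ?sub1set ?yS // iyX cardsU1 yX addnCA add1n.
  exists y; first exact: newT.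
  rewrite L_addT ?(subsetP sY') // iX /=; apply: (leq_trans _ slack).
  by rewrite -addSn leq_add2r nullity_setU1.
(* The nullity bound is tight: only elements of T raising rk_N Y can be added. *)
have ltYY' : rk IN Y < rk IN (Y :|: Y').
  have := rkS IN0 (subsetUr Y Y'); have := rk_leq_card IN Y.
  by have := rk_leq_card IN Y'; move: nY nY' tight ltXY; rewrite /nullity; clear; lia.
have [y yY' ltY] := rk_augment matN ltYY'.
have yY : y \notin Y by apply: contraTN ltY => yY; rewrite (setUidPr _) ?sub1set ?ltnn.
exists y; first exact: newT.
rewrite L_addT ?(subsetP sY') // iX /=; have := rk_leq_card IN Y.
by move: nY ltY; rewrite /nullity cardsU1 yY /=; clear; lia.
Qed.

Lemma fp_matroid : is_matroid (S :|: T) L.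
Proof.
split.
- by move=> Z; rewrite fp_indepE => /and3P[].
- by rewrite fp_indepE sub0set !set0I IM0 /nullity cards0.
- move=> Z Z' sZ'Z; rewrite !fp_indepE => /and3P[sZ iZS nZ].
  rewrite (subset_trans sZ'Z sZ) (matroid_indep_subset matM (setSI S sZ'Z) iZS) /=.
  apply: (leq_trans _ nZ); apply: leq_add; last exact: subset_leq_card (setSI S sZ'Z).
  exact: (nullityS IN0 (matroid_indep_subset matN) (setSI T sZ'Z)).
move=> Z Z' LZ LZ'; have /and3P[sZ _ _] := LZ; have /and3P[sZ' _ _] := LZ'.
move: LZ LZ'; rewrite (setI_ST sZ) (setI_ST sZ').
by apply: fp_augment; apply: subsetIr.
Qed.

Lemma fp_rk X Y : X \subset S -> Y \subset T ->
  rk L (X :|: Y) = minn (rk IM X + #|Y|) (m + rk IN Y).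
Proof.
move=> sX sY; apply/eqP; rewrite eqn_leq; apply/andP; split.
  apply/bigmax_leqP => Z /andP[sZXY LZ].
  have sZST := subset_trans sZXY (setUSS sX sY).
  have sZX : Z :&: S \subset X by rewrite -(setUI_S sX sY) setSI.
  have sZY : Z :&: T \subset Y by rewrite -(setUI_T sX sY) setSI.
  move: LZ; rewrite fp_indepE sZST /= => /andP[iZS nZ].
  rewrite (setI_ST sZST) card_setU_ST ?subsetIr //.
  have := indep_leq_rk sZX iZS; have := subset_leq_card sZY.
  have := rkS IN0 sZY; have := rk_leq_card IN (Z :&: T).
  by move: nZ; rewrite /nullity; clear; lia.
have [BX /andP[sBX iBX] eBX] := exists_rk_basis IM0 X.
have [BY /andP[sBY iBY] eBY] := exists_rk_basis IN0 Y.
have rkXm : rk IM X <= m := rkS IM0 sX.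
(* Y0 pads a basis of Y with as many dependent elements as the slack m - rk_M X allows. *)
have [Y0 [sBY0 sY0Y cardY0]] :
    exists Y0, [/\ BY \subset Y0, Y0 \subset Y & #|Y0| = minn #|Y| (rk IN Y + (m - rk IM X))].
  by apply: exists_subset_card sBY _; have := rk_leq_card IN Y; rewrite eBY; clear; lia.
have sBXS := subset_trans sBX sX; have sY0T := subset_trans sY0Y sY.
have LZ : L (BX :|: Y0).
  rewrite fp_indep_setU // iBX eBX /nullity.
  have := indep_leq_rk sBY0 iBY; rewrite eBY cardY0.
  by move: rkXm; clear; lia.
have := indep_leq_rk (setUSS sBX sY0Y) LZ.
rewrite card_setU_ST // eBX cardY0.
by move: rkXm; clear; lia.
Qed.

Lemma fp_rk_subS X : X \subset S -> rk L X = rk IM X.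
Proof.
move=> sX; rewrite -{1}[X]setU0 fp_rk ?sub0set // cards0.
by have := rkS IM0 sX; clear; lia.
Qed.

Lemma fp_rk_SU Y : Y \subset T -> rk L (S :|: Y) = m + rk IN Y.
Proof. by move=> sY; rewrite fp_rk //; have := rk_leq_card IN Y; clear; lia. Qed.

Lemma fp_cyclic_flat_subS A : A \subset S -> A != S ->
  cyclic_flat (S :|: T) L A <-> cyclic_flat S IM A.
Proof.
move=> sAS nAS; rewrite (cyclic_flat_rk fp_matroid) (cyclic_flat_rk matM).
have rkLA := fp_rk_subS sAS.
have rkL_addS x : x \in S -> rk L (x |: A) = rk IM (x |: A).
  by move=> xS; rewrite fp_rk_subS // subUset sub1set xS.
have rkL_delx x : rk L (A :\ x) = rk IM (A :\ x).
  by rewrite fp_rk_subS // (subset_trans (subD1set A x)).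
split=> -[[_ flA] cycA]; (split; [split=> // | ]).
- move=> x /setDP[xS xA]; rewrite -rkLA -rkL_addS //.
  by apply: flA; rewrite !inE xA xS.
- by move=> x xA; rewrite -rkLA -rkL_delx; apply: cycA.
- exact: subset_trans sAS (subsetUl S T).
- move=> x /setDP[xST xA]; case/setUP: xST => [xS | xT].
    by rewrite rkLA rkL_addS //; apply: flA; rewrite !inE xA xS.
  have [x0 x0S x0A] : exists2 x0, x0 \in S & x0 \notin A.
    by apply/subsetPn; apply: contra nAS => sSA; rewrite eqEsubset sAS sSA.
  have sx0AS : x0 |: A \subset S by rewrite subUset sub1set x0S sAS.
  have := flA x0; rewrite !inE x0A x0S => /(_ isT); have := rkS IM0 sx0AS.
  by rewrite rkLA (setUC [set x]) fp_rk ?sub1set // cards1 -/m; clear; lia.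
- by move=> x xA; rewrite rkLA rkL_delx; apply: cycA.
Qed.

Lemma fp_cyclic_flat_SU B : B \subset T -> B != set0 ->
  cyclic_flat (S :|: T) L (S :|: B) <-> cyclic_flat T IN B.
Proof.
move=> sBT nB0; rewrite (cyclic_flat_rk fp_matroid) (cyclic_flat_rk matN).
have rkL_addT x : x \in T -> rk L (x |: (S :|: B)) = m + rk IN (x |: B).
  by move=> xT; rewrite setUCA fp_rk_SU // subUset sub1set xT.
have rkL_delB x : x \in B -> rk L ((S :|: B) :\ x) = m + rk IN (B :\ x).
  move=> xB; rewrite setDUl (setD1_notin (notin_S (subsetP sBT x xB))).
  by rewrite fp_rk_SU // (subset_trans (subD1set B x)).
have rkLSB := fp_rk_SU sBT.
split=> -[[_ fl] cyc]; (split; [split=> // | ]).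
- move=> x /setDP[xT xB]; have xS := notin_S xT.
  have := fl x; rewrite rkLSB rkL_addT // ltn_add2l; apply.
  by rewrite !inE negb_or xS xB xT orbT.
- move=> x xB; have := cyc x; rewrite rkLSB rkL_delB // inE xB orbT => /(_ isT).
  by move/addnI.
- exact: setUS.
- move=> x; rewrite !inE negb_or => /andP[/andP[xS xB] xST].
  have xT : x \in T by rewrite (negbTE xS) in xST.
  by rewrite rkLSB rkL_addT // ltn_add2l; apply: fl; rewrite !inE xB xT.
- move=> x /setUP[xS | xB]; last by rewrite rkLSB rkL_delB // cyc.
  have [y yB] := set0Pn _ nB0.
  have := rk_ltn_card yB (cyc y yB); have := rk_setD1 IM0 (matroid_indep_subset matM) S x.
  rewrite rkLSB setDUl (setD1_notin (contra (subsetP sBT x) (notin_T xS))).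
  by rewrite fp_rk ?subD1set // -/m; clear; lia.
Qed.

Lemma fp_cyclic_flat_meets_T A : A \subset S :|: T ->
  cyclic_flat (S :|: T) L A -> A :&: T != set0 -> S \subset A.
Proof.
move=> sA /(cyclic_flat_rk fp_matroid) [[_ flA] cycA] /set0Pn[y].
set X := A :&: S; set Y := A :&: T => yY.
have sX : X \subset S := subsetIr A S.
have sY : Y \subset T := subsetIr A T.
have eA : A = X :|: Y := setI_ST sA.
have yX : y \notin X := contra (subsetP sX y) (notin_S (subsetP sY y yY)).
have rkA : rk L A = m + rk IN Y.
  have yA : y \in A by rewrite eA inE yY orbT.
  have sYyT : Y :\ y \subset T := subset_trans (subD1set Y y) sY.
  have := cycA y yA; rewrite eA setDUl (setD1_notin yX) !fp_rk //.
  have := rkS IN0 (subD1set Y y); have := cardsD1 y Y; rewrite yY; clear; lia.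
apply/subsetP => x xS; apply/negPn/negP => xA.
have := flA x; rewrite !inE xA xS rkA eA setUA fp_rk ?subUset ?sub1set ?xS //.
by move=> /(_ isT); clear; lia.
Qed.

Lemma fp_cyclic_flat_S : cyclic_flat (S :|: T) L S <->
  (forall x, ~ isthmus S IM x) /\ (forall x, ~ loop T IN x).
Proof.
rewrite (cyclic_flat_rk fp_matroid).
have rkLS : rk L S = m by rewrite fp_rk_subS.
have rkL_addT x : x \in T -> rk L (x |: S) = m + IN [set x].
  by move=> xT; rewrite setUC fp_rk_SU ?sub1set // rk_set1.
have rkL_delS x : rk L (S :\ x) = rk IM (S :\ x) by rewrite fp_rk_subS ?subD1set.
split=> [[[_ flS] cycS] | [noIsth noLoop]].
  split=> [x [xS] | x [xT nx]].
    by rewrite -rkL_delS cycS // rkLS ltnn.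
  have := flS x; rewrite !inE (notin_S xT) xT orbT rkLS rkL_addT // (negbTE nx) addn0.
  by rewrite ltnn => /(_ isT).
split; [split=> [|x] | move=> x xS].
- exact: subsetUl.
- rewrite !inE => /andP[xS xST]; have xT : x \in T by rewrite (negbTE xS) in xST.
  rewrite rkLS rkL_addT //; case: (boolP (IN _)) => [_ | nx]; first by rewrite addn1.
  by case: (noLoop x).
- rewrite rkLS rkL_delS; apply/eqP; rewrite eqn_leq (rkS IM0 (subD1set S x)) leqNgt.
  by apply/negP => ltSx; apply: (noIsth x).
Qed.

End FreeProduct.

End Universe.

Theorem proposition6p1 (U : finType) (S T : {set U})
    (IM IN : {set U} -> bool) :
  is_matroid S IM -> is_matroid T IN -> [disjoint S & T] ->
  (forall A : {set U}, A \subset S :|: T -> A != S ->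
     (cyclic_flat (S :|: T) (free_product_indep S IM T IN) A <->
      (A \subset S /\ cyclic_flat S IM A) \/
      (exists B : {set U}, [/\ B != set0, cyclic_flat T IN B & A = S :|: B])))
  /\
  (cyclic_flat (S :|: T) (free_product_indep S IM T IN) S <->
     (forall x, ~ isthmus S IM x) /\ (forall x, ~ loop T IN x)).
Proof.
move=> matM matN disST; split; last exact: fp_cyclic_flat_S.
move=> A sA nAS; have eA := setI_ST sA; split.
  move=> cfA; case: (eqVneq (A :&: T) set0) => [AT0 | ATn0].
    have sAS : A \subset S by rewrite eA AT0 setU0 subsetIr.
    by left; split; last exact/(fp_cyclic_flat_subS matM matN disST sAS nAS).
  have sSA := fp_cyclic_flat_meets_T matM matN disST sA cfA ATn0.
  have eSA : A = S :|: (A :&: T) by rewrite {1}eA (setIidPr sSA).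
  right; exists (A :&: T); split=> //.
  by apply/(fp_cyclic_flat_SU matM matN disST (subsetIr A T) ATn0); rewrite -eSA.
case=> [[sAS cfA] | [B [nB0 cfB ->]]].
  exact/(fp_cyclic_flat_subS matM matN disST sAS nAS).
exact/(fp_cyclic_flat_SU matM matN disST cfB.1.1 nB0).
Qed.
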